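(* Let $n\ge3$, $N=\binom n2$, fix distinct $s,t\in[n]$, and let $S=\{\{u,v\}:u\in\{s,t\},v\in[n]\setminus\{s,t\}\}$. For $w\in\mathbb{R}^N$ let $F(w)=\arg\min_{y\in\{-1,1\}^n,\ y_s=1,\ y_t=-1}\sum_{\{i,j\}}w_{\{i,j\}}(1-y_iy_j)$. Let $w\in\mathbb{R}^N$ be such that this minimizer is unique, call it $f(w)$, and let $w'$ differ from $w$ only on one pair $\{u,v\}$, by $z\in[-1,1]$. Then there exists $a\in\mathbb{R}^N$ supported on $S$, with $\|a\|_1\le2$, which depends only on $f(w)$, the pair $\{u,v\}$ and $z$, such that $F(w'+a)$ has the unique minimizer $f(w)$. In other words, $S$ is a dominating set of sensitivity $2$ for the (unique) minimum $s$-$t$ cut function $f$.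
   Context: A vector $y\in\{-1,1\}^n$ with $y_s=1,y_t=-1$ encodes an $s$-$t$ cut (the two sides being $\{i:y_i=1\}$ and $\{i:y_i=-1\}$); $\sum w_{\{i,j\}}(1-y_iy_j)$ is twice the weight of the cut for weight vector $w$ indexed by unordered pairs of $[n]$. *)

From HB Require Import structures.
From mathcomp Require Import all_boot all_order all_algebra.
Set Implicit Arguments. Unset Strict Implicit. Unset Printing Implicit Defensive.
Import Order.TTheory GRing.Theory Num.Theory.
Local Open Scope ring_scope.

(* Weight vectors in R^N, N = 'C(n,2), are indexed by
   unordered pairs {i,j}, represented as 2-element sets [set i; j]; values on
   other subsets of 'I_n are irrelevant to the objective. *)
Definition weights (R : realFieldType) (n : nat) := {set 'I_n} -> R.

Definition is_st_cut (R : realFieldType) (n : nat) (s t : 'I_n)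
  (y : {ffun 'I_n -> R}) : Prop :=
  (forall i, y i = 1 \/ y i = -1) /\ y s = 1 /\ y t = -1.

Definition cut_obj (R : realFieldType) (n : nat) (w : weights R n)
  (y : {ffun 'I_n -> R}) : R :=
  \sum_(i < n) \sum_(j < n | (i < j)%N) w [set i; j] * (1 - y i * y j).

Definition unique_min_cut (R : realFieldType) (n : nat) (s t : 'I_n)
  (w : weights R n) (y : {ffun 'I_n -> R}) : Prop :=
  is_st_cut s t y /\
  forall y', is_st_cut s t y' -> y' <> y -> cut_obj w y < cut_obj w y'.

Definition S_pairs (n : nat) (s t : 'I_n) (e : {set 'I_n}) : Prop :=
  exists u v, (u == s \/ u == t) /\ v != s /\ v != t /\ e = [set u; v].

Definition supported_on (R : realFieldType) (n : nat) (a : weights R n)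
  (P : {set 'I_n} -> Prop) : Prop := forall e, ~ P e -> a e = 0.

Definition norm1 (R : realFieldType) (n : nat) (a : weights R n) : R :=
  \sum_(e : {set 'I_n}) `|a e|.

Definition perturb (R : realFieldType) (n : nat) (w : weights R n)
  (e0 : {set 'I_n}) (z : R) : weights R n :=
  fun e => if e == e0 then w e + z else w e.

Definition addw (R : realFieldType) (n : nat) (w a : weights R n) : weights R n :=
  fun e => w e + a e.

From HB Require Import structures.
From mathcomp Require Import all_boot all_order all_algebra.
From mathcomp Require Import lra.
Set Implicit Arguments. Unset Strict Implicit. Unset Printing Implicit Defensive.
Import Order.TTheory GRing.Theory Num.Theory.
Local Open Scope ring_scope.

(* Changing the weight of the pair {u,v} by z changes the objective of every
   cut y' by z (1 - y'_u y'_v).  If this makes the current minimizer y relatively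
   more expensive (z > 0 with {u,v} cut by y, or z < 0 with {u,v} uncut), tie
   each non-terminal endpoint x of {u,v} to the terminal on its own side of y by
   an extra edge of weight c = max(0, -z y_u y_v) <= 1.  These edges are uncut
   by y, while any cut y' that separates u and v differently from y cuts
   exactly one of them; the 2c it pays there covers the 2 |z| it may gain
   relative to y. *)

Section CutObjective.
Variables (R : realFieldType) (n : nat).
Implicit Types (w d : weights R n) (y : {ffun 'I_n -> R}).

Definition single_weight (E : {set 'I_n}) (c : R) : weights R n :=
  fun e => if e == E then c else 0.

Lemma eq_cut_obj w1 w2 y :
  (forall e, w1 e = w2 e) -> cut_obj w1 y = cut_obj w2 y.
Proof. by move=> w12; apply: eq_bigr => i _; apply: eq_bigr => j _; rewrite w12. Qed.

Lemma cut_objD w1 w2 y : cut_obj (addw w1 w2) y = cut_obj w1 y + cut_obj w2 y.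
Proof.
rewrite /cut_obj -big_split; apply: eq_bigr => i _.
by rewrite -big_split; apply: eq_bigr => j _; rewrite mulrDl.
Qed.

Lemma cut_obj_sum (I : finType) (A : {pred I}) (f : I -> weights R n) y :
  cut_obj (fun e => \sum_(x in A) f x e) y = \sum_(x in A) cut_obj (f x) y.
Proof.
rewrite /cut_obj exchange_big; apply: eq_bigr => i _.
rewrite exchange_big; apply: eq_bigr => j _.
by rewrite mulr_suml.
Qed.

Lemma eq_set2_lt (i j p q : 'I_n) : (i < j)%N -> (p < q)%N ->
  ([set i; j] == [set p; q]) = (i == p) && (j == q).
Proof.
move=> lt_ij lt_pq; apply/eqP/andP => [eq_ij_pq | [/eqP-> /eqP->]] //.
have := set21 i j; have := set22 i j; rewrite eq_ij_pq !inE.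
move=> /orP[] /eqP eq_j /orP[] /eqP eq_i; subst; rewrite ?eqxx //;
  by move: lt_ij lt_pq; rewrite ?ltnn // => /ltn_trans lt_qq /lt_qq; rewrite ltnn.
Qed.

Lemma cut_obj_single_pair (p q : 'I_n) c y : p != q ->
  cut_obj (single_weight [set p; q] c) y = c * (1 - y p * y q).
Proof.
wlog lt_pq : p q / (p < q)%N.
  move=> lt_case neq_pq; case: (ltngtP p q) => [lt_pq|lt_qp|/val_inj eq_pq].
  - exact: lt_case lt_pq neq_pq.
  - by rewrite setUC (lt_case q p lt_qp) 1?eq_sym // (mulrC (y q)).
  - by rewrite eq_pq eqxx in neq_pq.
move=> _; rewrite /cut_obj (bigD1 p) //= [X in _ + X]big1 ?addr0 => [|i neq_ip].
  rewrite (bigD1 q) //= [X in _ + X]big1 ?addr0 => [|j /andP[lt_pj neq_jq]].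
    by rewrite /single_weight eq_set2_lt // !eqxx.
  by rewrite /single_weight eq_set2_lt // eqxx (negbTE neq_jq) mul0r.
by apply: big1 => j lt_ij; rewrite /single_weight eq_set2_lt // (negbTE neq_ip) mul0r.
Qed.

Lemma cut_obj_single0 E y : cut_obj (single_weight E 0) y = 0.
Proof.
apply: big1 => i _; apply: big1 => j _.
by rewrite /single_weight; case: ifP; rewrite mul0r.
Qed.

Lemma norm1_single E c : norm1 (single_weight E c) = `|c|.
Proof.
rewrite /norm1 (bigD1 E) //= big1 ?addr0 => [|e neq_eE].
  by rewrite /single_weight eqxx.
by rewrite /single_weight (negbTE neq_eE) normr0.
Qed.

Lemma norm1_sum (I : finType) (A : {pred I}) (f : I -> weights R n) :
  norm1 (fun e => \sum_(x in A) f x e) <= \sum_(x in A) norm1 (f x).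
Proof.
rewrite /norm1 exchange_big; apply: ler_sum => e _; exact: ler_norm_sum.
Qed.

Lemma supported_on_sum (I : finType) (A : {pred I}) (f : I -> weights R n) P :
  (forall x, x \in A -> supported_on (f x) P) ->
  supported_on (fun e => \sum_(x in A) f x e) P.
Proof. by move=> supp_f e notPe; apply: big1 => x Ax; exact: supp_f. Qed.

Lemma eq_unique_min_cut s t w1 w2 y : (forall e, w1 e = w2 e) ->
  unique_min_cut s t w1 y -> unique_min_cut s t w2 y.
Proof.
move=> w12 [cut_y min_y]; split=> // y' cut_y' neq_y'y.
by rewrite -!(eq_cut_obj _ w12); exact: min_y.
Qed.

Lemma unique_min_cut_addw s t w d y :
  unique_min_cut s t w y ->
  (forall y', is_st_cut s t y' -> cut_obj d y <= cut_obj d y') ->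
  unique_min_cut s t (addw w d) y.
Proof.
move=> [cut_y min_y] min_d; split=> // y' cut_y' neq_y'y.
by rewrite !cut_objD ltr_leD //; [exact: min_y | exact: min_d].
Qed.

End CutObjective.

Section Compensation.
Variables (R : realFieldType) (n : nat) (s t : 'I_n).
Implicit Types (y : {ffun 'I_n -> R}) (p z : R).

Definition compensation_coef p z : R := Num.max 0 (- (z * p)).

Lemma compensation_coef_norm_le1 p z : `|p| = 1 -> -1 <= z <= 1 -> `|compensation_coef p z| <= 1.
Proof.
move=> norm_p /andP[ge_z le_z].
have : `|z * p| <= 1 by rewrite normrM norm_p mulr1 ler_norml ge_z.
rewrite ler_norml /compensation_coef ger0_norm ?le_max ?lexx // ge_max ler01.
by move=> /andP[? _]; rewrite /= lerNl.
Qed.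

Lemma compensation_coef_exchange (a b a' b' z : R) :
  (a = 1 \/ a = -1) -> (b = 1 \/ b = -1) ->
  (a' = 1 \/ a' = -1) -> (b' = 1 \/ b' = -1) ->
  z * (1 - a * b) <=
    z * (1 - a' * b') + compensation_coef (a * b) z * ((1 - a * a') + (1 - b * b')).
Proof.
move=> a_sign b_sign a'_sign b'_sign.
have c_ge0 : 0 <= compensation_coef (a * b) z by rewrite le_max lexx.
have c_ge : - (z * (a * b)) <= compensation_coef (a * b) z by rewrite le_max lexx orbT.
move: (compensation_coef _ _) c_ge0 c_ge => c.
by case: a_sign b_sign a'_sign b'_sign => -> [->|->] [->|->] [->|->]; lra.
Qed.

Definition side_terminal y x : 'I_n := if y x == 1 then s else t.

Lemma st_cut_side_terminal y y' x : is_st_cut s t y -> is_st_cut s t y' ->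
  y' (side_terminal y x) = y x.
Proof.
move=> [/(_ x) y_x _] [_ [y's y't]]; rewrite /side_terminal.
by case: eqP => [-> // | neq_yx1]; case: y_x => [/neq_yx1 | ->].
Qed.

Definition terminal_link y x c : weights R n :=
  single_weight [set side_terminal y x; x] (if (x != s) && (x != t) then c else 0).

Lemma terminal_link_supported y x c : supported_on (terminal_link y x c) (S_pairs s t).
Proof.
move=> e notSe; rewrite /terminal_link /single_weight.
case: eqP => // eq_e; case: ifP => // /andP[neq_xs neq_xt]; case: notSe.
exists (side_terminal y x), x; split=> //.
by rewrite /side_terminal; case: ifP => _; [left | right].
Qed.

Lemma norm1_terminal_link y x c : norm1 (terminal_link y x c) <= `|c|.
Proof. by rewrite norm1_single; case: ifP; rewrite ?normr0. Qed.

Lemma cut_obj_terminal_link y y' x c : is_st_cut s t y -> is_st_cut s t y' ->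
  cut_obj (terminal_link y x c) y' = c * (1 - y x * y' x).
Proof.
move=> cut_y cut_y'; rewrite /terminal_link; case: ifPn => [/andP[neq_xs neq_xt] | ].
  have neq_side_x : side_terminal y x != x.
    by rewrite /side_terminal; case: ifP => _; rewrite eq_sym.
  by rewrite cut_obj_single_pair // (st_cut_side_terminal _ cut_y cut_y') mulrC.
rewrite negb_and !negbK cut_obj_single0 => /orP[] /eqP ->.
  by case: cut_y cut_y' => [_ [-> _]] [_ [-> _]]; rewrite mulr1 subrr mulr0.
by case: cut_y cut_y' => [_ [_ ->]] [_ [_ ->]]; rewrite mulrNN mulr1 subrr mulr0.
Qed.

Definition compensation_weights y (e : {set 'I_n}) z : weights R n :=
  fun e' => \sum_(x in e) terminal_link y x (compensation_coef (\prod_(i in e) y i) z) e'.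

Lemma compensation_weights_supported y e z :
  supported_on (compensation_weights y e z) (S_pairs s t).
Proof. by apply: supported_on_sum => x _; exact: terminal_link_supported. Qed.

Lemma norm1_compensation_weights y e z : is_st_cut s t y -> -1 <= z <= 1 ->
  norm1 (compensation_weights y e z) <= #|e|%:R.
Proof.
move=> [y_sign _] z_bound; apply: le_trans (norm1_sum _ _) _.
rewrite -sumr_const; apply: ler_sum => x _.
apply: le_trans (norm1_terminal_link _ _ _) _; apply: compensation_coef_norm_le1 => //.
by rewrite normr_prod big1 // => i _; case: (y_sign i) => ->; rewrite ?normrN normr1.
Qed.

Lemma cut_obj_compensation_weights y y' e z : is_st_cut s t y -> is_st_cut s t y' ->
  cut_obj (compensation_weights y e z) y' =
  \sum_(x in e) compensation_coef (\prod_(i in e) y i) z * (1 - y x * y' x).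
Proof.
by move=> cut_y cut_y'; rewrite cut_obj_sum; apply: eq_bigr => x _; exact: cut_obj_terminal_link.
Qed.

Definition compensated_perturbation y e z : weights R n :=
  addw (single_weight e z) (compensation_weights y e z).

Lemma compensated_perturbation_min y y' (u v : 'I_n) z : u != v ->
  is_st_cut s t y -> is_st_cut s t y' ->
  cut_obj (compensated_perturbation y [set u; v] z) y <=
  cut_obj (compensated_perturbation y [set u; v] z) y'.
Proof.
move=> neq_uv cut_y cut_y'; rewrite !cut_objD !cut_obj_single_pair //.
rewrite !cut_obj_compensation_weights // !big_setU1 ?inE //= !big_set1.
have [[y_sign _] [y'_sign _]] := (cut_y, cut_y').
have y_sq x : y x * y x = 1 by case: (y_sign x) => ->; rewrite ?mulrNN mulr1.
rewrite !y_sq !subrr !mulr0 !addr0 -mulrDr.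
exact: compensation_coef_exchange.
Qed.

End Compensation.

Theorem lemma5p2 (R : realFieldType) (n : nat) (s t : 'I_n) :
  (3 <= n)%N -> s != t ->
  exists A : {ffun 'I_n -> R} -> {set 'I_n} -> R -> weights R n,
    forall (w : weights R n) (y : {ffun 'I_n -> R}) (u v : 'I_n) (z : R),
      unique_min_cut s t w y -> u != v -> -1 <= z <= 1 ->
      let a := A y [set u; v] z in
      supported_on a (S_pairs s t) /\ norm1 a <= 2 /\
      unique_min_cut s t (addw (perturb w [set u; v] z) a) y.
Proof.
move=> _ _; exists (compensation_weights s t) => w y u v z min_y neq_uv z_bound a.
have [cut_y _] := min_y.
split; first exact: compensation_weights_supported.
split.
  by apply: le_trans (norm1_compensation_weights [set u; v] cut_y z_bound) _; rewrite cards2 neq_uv.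
apply: (eq_unique_min_cut (w1 := addw w (compensated_perturbation s t y [set u; v] z))).
  move=> e; rewrite /compensated_perturbation /addw /perturb /single_weight.
  by case: ifP => _; rewrite ?add0r ?addrA.
apply: unique_min_cut_addw min_y _ => y' cut_y'.
exact: compensated_perturbation_min neq_uv cut_y cut_y'.
Qed.
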